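(* Let $U_1,\dots,U_n$ be subsets of a set $X$, $\mathcal C=\mathrm{code}(\mathcal U,X)\subseteq2^{[n]}$, and $I_{\Gamma(\mathcal C)}$ the Stanley–Reisner ideal of the polar complex of $\mathcal C$. Then for $\sigma,\tau\subseteq[n]$, $$x^\sigma y^\tau\in I_{\Gamma(\mathcal C)}\iff\bigcap_{i\in\sigma}U_i\subseteq\bigcup_{j\in\tau}U_j,$$ with the conventions $\bigcap_{i\in\emptyset}U_i=X$ and $\bigcup_{j\in\emptyset}U_j=\emptyset$.
   Context: For $\sigma\subseteq[n]$ the atom is $A_\sigma=\bigl(\bigcap_{i\in\sigma}U_i\bigr)\setminus\bigcup_{j\notin\sigma}U_j$ (with $A_\emptyset=X\setminus\bigcup_iU_i$), and $\mathrm{code}(\mathcal U,X)=\{\sigma:A_\sigma\neq\emptyset\}$. The polar complex $\Gamma(\mathcal C)$ is the simplicial complex on $[n]\sqcup\{\bar1,\dots,\bar n\}$ consisting of all subsets of $\sigma\sqcup\{\bar i:i\in[n]\setminus\sigma\}$, $\sigma\in\mathcal C$. In $S=\mathbb F_2[x_1,\dots,x_n,y_1,\dots,y_n]$, with $x^\sigma=\prod_{i\in\sigma}x_i$ and $y^\tau=\prod_{j\in\tau}y_j$, the Stanley–Reisner ideal is $I_{\Gamma(\mathcal C)}=\langle x^\sigma y^\tau:\sigma\sqcup\{\bar j:j\in\tau\}\notin\Gamma(\mathcal C)\rangle$. *)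

From HB Require Import structures.
From mathcomp Require Import all_boot all_algebra.
From mathcomp Require Import multinomials.mpoly.
Set Implicit Arguments. Unset Strict Implicit. Unset Printing Implicit Defensive.
Import GRing.Theory.
Local Open Scope ring_scope.

Definition atom_nonempty (n : nat) (X : Type) (U : 'I_n -> X -> Prop)
  (sigma : {set 'I_n}) : Prop :=
  exists x : X, forall i : 'I_n, (i \in sigma) <-> U i x.

Definition code (n : nat) (X : Type) (U : 'I_n -> X -> Prop) : {set 'I_n} -> Prop :=
  atom_nonempty U.

(* vertex set [n] ⊔ {1bar,...,nbar}: inl i = i, inr j = jbar *)
Definition polar_vertices (n : nat) (sigma : {set 'I_n}) : {set 'I_n + 'I_n} :=
  [set inl i | i in sigma] :|: [set inr j | j in ~: sigma].

Definition polar_face (n : nat) (C : {set 'I_n} -> Prop) (F : {set 'I_n + 'I_n}) : Prop :=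
  exists sigma, C sigma /\ F \subset polar_vertices sigma.

Definition xy_set (n : nat) (sigma tau : {set 'I_n}) : {set 'I_n + 'I_n} :=
  [set inl i | i in sigma] :|: [set inr j | j in tau].

(* S = F_2[x_1..x_n, y_1..y_n]; x_i = 'X_(lshift n i), y_j = 'X_(rshift n j) *)
Definition S (n : nat) := {mpoly 'F_2[n + n]}.

Definition xy_mono (n : nat) (sigma tau : {set 'I_n}) : S n :=
  (\prod_(i in sigma) 'X_(lshift n i)) * (\prod_(j in tau) 'X_(rshift n j)).

Definition SR_gen (n : nat) (C : {set 'I_n} -> Prop) (p : S n) : Prop :=
  exists sigma tau : {set 'I_n},
    ~ polar_face C (xy_set sigma tau) /\ p = xy_mono sigma tau.

Definition in_ideal_gen (R : comNzRingType) (G : R -> Prop) (p : R) : Prop :=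
  exists s : seq (R * R), (forall q, q \in s -> G q.2) /\
    p = \sum_(q <- s) q.1 * q.2.

From HB Require Import structures.
From mathcomp Require Import all_boot all_algebra.
From mathcomp Require Import multinomials.mpoly.
From Stdlib Require Import Classical ClassicalDescription.
Local Open Scope ring_scope.
Import GRing.Theory.

(* A squarefree monomial lies in a Stanley–Reisner ideal iff its support is a
   nonface. Indeed, evaluating at the 0/1 indicator point of a maximal face
   c ⊔ {jbar : j ∉ c} sends a squarefree monomial to 1 if its support lies in
   that face and to 0 otherwise; so it kills every generator, hence the ideal,
   but not a monomial supported on a face. For the polar complex of a code,
   x^sigma y^tau is supported on a face iff some point of X lies in every U_i,
   i in sigma, and in no U_j, j in tau. *)

Lemma exists_set_of_pred {T : finType} (P : T -> Prop) :
  exists A : {set T}, forall t, t \in A <-> P t.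
Proof.
exists [set t | if excluded_middle_informative (P t) then true else false].
by move=> t; rewrite inE; case: excluded_middle_informative.
Qed.

Lemma prodr_natb (R : comNzSemiRingType) (T : finType) (A B : {pred T}) :
  \prod_(t in A) (t \in B)%:R = (A \subset B)%:R :> R.
Proof.
have [/subsetP AB | /subsetPn [t At Bt]] := boolP (A \subset B).
  by apply: big1 => t /AB ->.
by rewrite (bigD1 t At) /= (negbTE Bt) mul0r.
Qed.

Lemma in_ideal_gen_gen (R : comNzRingType) (G : R -> Prop) (p : R) :
  G p -> in_ideal_gen G p.
Proof.
move=> Gp; exists [:: (1, p)]; split; last by rewrite big_seq1 mul1r.
by move=> q; rewrite inE => /eqP ->.
Qed.

Lemma rmorph_in_ideal_gen_eq0 (R R' : comNzRingType) (f : {rmorphism R -> R'})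
    (G : R -> Prop) (p : R) :
  (forall g, G g -> f g = 0) -> in_ideal_gen G p -> f p = 0.
Proof.
move=> fG [s [sG ->]]; rewrite rmorph_sum big_seq big1 // => q /sG /fG Gq.
by rewrite rmorphM Gq mulr0.
Qed.

Section PolarComplex.

Variable n : nat.
Implicit Types (sigma tau c : {set 'I_n}) (C : {set 'I_n} -> Prop).

Lemma inl_polar_vertices c i : (inl i \in polar_vertices c) = (i \in c).
Proof.
rewrite !inE mem_imset; last exact: inl_inj.
by case: (i \in c) => //; apply/imsetP => -[].
Qed.

Lemma inr_polar_vertices c j : (inr j \in polar_vertices c) = (j \notin c).
Proof.
rewrite !inE (mem_imset _ _ (@inr_inj _ _)) inE orbC.
by case: (j \in c) => //=; apply/imsetP => -[].
Qed.

Lemma xy_set_sub_polar_vertices sigma tau c :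
  (xy_set sigma tau \subset polar_vertices c) =
  (sigma \subset c) && [disjoint tau & c].
Proof.
rewrite subUset !sub_imset_pre disjoint_subset.
by congr andb; apply: eq_subset_r => i;
  rewrite in_set ?inl_polar_vertices ?inr_polar_vertices ?inE.
Qed.

(* The point with x_i = [i \in c] and y_j = [j \notin c]. *)
Definition polar_point c (k : 'I_(n + n)) : 'F_2 :=
  (split k \in polar_vertices c)%:R.

Lemma meval_polar_point_xy_mono c sigma tau :
  meval (polar_point c) (xy_mono sigma tau) =
  (xy_set sigma tau \subset polar_vertices c)%:R.
Proof.
rewrite /xy_mono mevalM !rmorph_prod /=.
under eq_bigr do
  rewrite mevalXU /polar_point (unsplitK (inl _)) inl_polar_vertices.
under [X in _ * X]eq_bigr do
  rewrite mevalXU /polar_point (unsplitK (inr _)) inr_polar_vertices -in_setC.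
by rewrite !prodr_natb -natrM mulnb -disjoints_subset xy_set_sub_polar_vertices.
Qed.

Lemma xy_mono_in_SR_ideal C sigma tau :
  in_ideal_gen (SR_gen C) (xy_mono sigma tau) <->
  ~ polar_face C (xy_set sigma tau).
Proof.
split=> [inI [c [Cc face]] | nonface]; last first.
  by apply: in_ideal_gen_gen; exists sigma, tau.
have : meval (polar_point c) (xy_mono sigma tau) = 0.
  apply: rmorph_in_ideal_gen_eq0 inI => _ [a [b [nonface_ab ->]]].
  rewrite /= meval_polar_point_xy_mono.
  by case: (boolP (_ \subset _)) => // sub; case: nonface_ab; exists c.
by rewrite meval_polar_point_xy_mono face => /eqP; rewrite oner_eq0.
Qed.

Lemma polar_face_code (X : Type) (U : 'I_n -> X -> Prop) sigma tau :
  polar_face (code U) (xy_set sigma tau) <->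
  exists x, (forall i, i \in sigma -> U i x) /\
            (forall j, j \in tau -> ~ U j x).
Proof.
split=> [[c [[x atom_x]]] | [x [Usigma Utau]]].
  rewrite xy_set_sub_polar_vertices => /andP [/subsetP sub_c dis_c].
  exists x; split=> [i /sub_c /atom_x // | j tau_j /atom_x c_j].
  by rewrite (disjointFr dis_c tau_j) in c_j.
have [c atom_x] := exists_set_of_pred (U^~ x).
exists c; split; first by exists x.
rewrite xy_set_sub_polar_vertices; apply/andP; split.
  by apply/subsetP => i /Usigma /atom_x.
rewrite disjoints_subset; apply/subsetP => j /Utau nUj.
by rewrite inE; apply/negP => /atom_x.
Qed.

End PolarComplex.

Theorem corollary6p8 (n : nat) (X : Type) (U : 'I_n -> X -> Prop)
    (sigma tau : {set 'I_n}) :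
  in_ideal_gen (SR_gen (code U)) (xy_mono sigma tau) <->
  (forall x : X, (forall i, i \in sigma -> U i x) ->
     exists j, j \in tau /\ U j x).
Proof.
rewrite xy_mono_in_SR_ideal polar_face_code.
split=> [no_witness x Usigma | cover [x [Usigma Utau]]].
  apply: NNPP => no_j; apply: no_witness; exists x; split=> // j tau_j Uj.
  by apply: no_j; exists j.
by have [j [tau_j Uj]] := cover x Usigma; apply: Utau Uj.
Qed.
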